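(* Let $B$ be a board with specified sink locations. Then $B$ admits a perfect layout if and only if it is possible to assign a color to each non-sink cell of $B$ such that, for every color $i$, the graph $G_i$ is connected.
   Context: A board is an $m\times n$ grid of unit cells in which exactly $c$ cells are sinks, one of each of $c$ colors, and all other cells are empty. A layout places, in some of the empty cells, arrows, each having one of the $c$ colors and one of the four cardinal directions. A packet of color $i$ may enter the grid through any unit edge of the outer boundary of the grid, into the adjacent cell, moving perpendicular to that edge into the grid; it moves one cell at a time in its current direction, and whenever it enters a cell containing an arrow of color $i$ its direction becomes that arrow's direction (arrows of other colors are ignored). The packet succeeds if it enters the sink of color $i$; it fails if it enters a sink of another color, leaves the grid, or travels forever without reaching a sink. A perfect layout is a layout in which every packet of every color entering through every boundary edge succeeds. Given a coloring of all cells of $B$ that agrees with the colors of the sinks, let $C_i$ be the set of cells of color $i$ (including the sink of color $i$) and $\partial B$ the set of unit edges on the boundary of $B$. Two cells of $C_i$, or a cell of $C_i$ and a boundary edge $e\in\partial B$, are visible to each other if they lie in the same row or same column (for a boundary edge: it is an end edge of that row or column) and no sink of a color other than $i$ lies strictly between them. $G_i$ is the graph on vertex set $C_i\cup\partial B$ with an edge between every pair of mutually visible vertices. *)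

From Stdlib Require Relation_Operators.
From mathcomp Require Import all_boot.

Set Implicit Arguments.
Unset Strict Implicit.
Unset Printing Implicit Defensive.

(* Board: cells are (row, column) : 'I_m * 'I_n.  Row 0 is the top row,
   column 0 the leftmost column.  Colors are 'I_c.  The sink of color j is
   the cell [sink j]. *)

Inductive dir := DUp | DDown | DLeft | DRight.

(* Unit edges of the outer boundary: the left/right end edge of row r,
   the top/bottom end edge of column k. *)
Inductive bedge (m n : nat) :=
  | BLeft of 'I_m | BRight of 'I_m | BTop of 'I_n | BBottom of 'I_n.

Section Board.
Variables (m n c : nat).
Notation cell := ('I_m * 'I_n)%type.
Variable sink : 'I_c -> cell.

Definition move (x : cell) (d : dir) : option cell :=
  match d with
  | DUp => if x.1 == 0 :> nat then None
           else omap (fun r => (r, x.2)) (insub x.1.-1 : option 'I_m)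
  | DDown => omap (fun r => (r, x.2)) (insub x.1.+1 : option 'I_m)
  | DLeft => if x.2 == 0 :> nat then None
             else omap (fun k => (x.1, k)) (insub x.2.-1 : option 'I_n)
  | DRight => omap (fun k => (x.1, k)) (insub x.2.+1 : option 'I_n)
  end.

Definition is_sink (x : cell) : bool := [exists j, sink j == x].

(* A layout: each cell holds at most one arrow (a color and a direction). *)
Definition layout := cell -> option ('I_c * dir).

Definition valid_layout (L : layout) : Prop := forall j, L (sink j) = None.

(* A packet state: the cell just entered and the current direction. *)
Definition step (i : 'I_c) (L : layout) (s : cell * dir) : option (cell * dir) :=
  let: (x, d) := s in
  if is_sink x then None else
  let d' := match L x with
            | Some (j, a) => if j == i then a else d
            | None => d
            end in
  omap (fun y => (y, d')) (move x d').

Definition entry (e : bedge m n) : option (cell * dir) :=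
  match e with
  | BLeft r => omap (fun k => ((r, k), DRight)) (insub 0 : option 'I_n)
  | BRight r => omap (fun k => ((r, k), DLeft)) (insub n.-1 : option 'I_n)
  | BTop k => omap (fun r => ((r, k), DDown)) (insub 0 : option 'I_m)
  | BBottom k => omap (fun r => ((r, k), DUp)) (insub m.-1 : option 'I_m)
  end.

(* a packet of color i entering through e succeeds: it eventually enters the
   sink of color i (before entering any other sink, leaving, or looping). *)
Definition succeeds (i : 'I_c) (L : layout) (e : bedge m n) : Prop :=
  exists (k : nat) (d : dir),
    iter k (fun o => obind (step i L) o) (entry e) = Some (sink i, d).

Definition perfect (L : layout) : Prop :=
  forall (i : 'I_c) (e : bedge m n), succeeds i L e.

Definition other_sink (i : 'I_c) (s : cell) : bool :=
  [exists j, (j != i) && (sink j == s)].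

Definition strictly_between (a b x : nat) : bool :=
  (minn a b < x) && (x < maxn a b).

Definition vis_cells (i : 'I_c) (x y : cell) : bool :=
  ((x.1 == y.1) && [forall s, (other_sink i s && (s.1 == x.1)) ==>
                               ~~ strictly_between x.2 y.2 s.2])
  || ((x.2 == y.2) && [forall s, (other_sink i s && (s.2 == x.2)) ==>
                                  ~~ strictly_between x.1 y.1 s.1]).

Definition vis_edge (i : 'I_c) (x : cell) (e : bedge m n) : bool :=
  match e with
  | BLeft r => (x.1 == r) &&
      [forall s, (other_sink i s && (s.1 == r)) ==> ~~ (s.2 < x.2)]
  | BRight r => (x.1 == r) &&
      [forall s, (other_sink i s && (s.1 == r)) ==> ~~ (x.2 < s.2)]
  | BTop k => (x.2 == k) &&
      [forall s, (other_sink i s && (s.2 == k)) ==> ~~ (s.1 < x.1)]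
  | BBottom k => (x.2 == k) &&
      [forall s, (other_sink i s && (s.2 == k)) ==> ~~ (x.1 < s.1)]
  end.

(* vertices of G_i: cells of color i, and all boundary edges *)
Definition vertex := (cell + bedge m n)%type.

Definition inV (col : cell -> 'I_c) (i : 'I_c) (v : vertex) : Prop :=
  match v with
  | inl x => col x = i
  | inr _ => True
  end.

Definition adjG (col : cell -> 'I_c) (i : 'I_c) (u v : vertex) : Prop :=
  inV col i u /\ inV col i v /\
  match u, v with
  | inl x, inl y => x <> y /\ vis_cells i x y
  | inl x, inr e => vis_edge i x e
  | inr e, inl x => vis_edge i x e
  | inr _, inr _ => False
  end.

Definition connectedG (col : cell -> 'I_c) (i : 'I_c) : Prop :=
  forall u v, inV col i u -> inV col i v -> Relation_Operators.clos_refl_trans _ (adjG col i) u v.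

End Board.

From mathcomp Require Import all_boot zify.
From Stdlib Require Import Relation_Operators Operators_Properties Wf_nat.
From Stdlib Require Import ClassicalEpsilon Classical.

(* Visibility in G_i is exactly the existence of an
   unobstructed ray: two distinct cells see each other iff one reaches the
   other by a walk meeting no sink of another color ([vis_cells_walk]), and a
   cell sees a boundary edge iff a packet entering through that edge reaches it
   in this way ([vis_edge_walk]).

   (=>) From a perfect layout L we color each sink by its color, each arrow
   cell of color j met by a packet of color j by j, and any other cell by the
   color of a sink it sees (a cell seeing no sink sees the left end of its row,
   [blind_sees_left]).  Along the trajectory of a color-i packet the current
   cell is always seen, through a sink-free line, from a vertex of G_i connected
   to the entry edge ([packet_seen]); as the packet ends in sink i, every vertex
   of G_i is connected to sink i.

   (<=) From a coloring with every G_i connected, call a hop of color i a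
   straight walk between cells of color i crossing no sink and no cell of color
   i.  Paths in G_i lift to chains of hops ([hops_to_sink]); each cell of color
   i receives an arrow of its color along a hop decreasing its hop-distance to
   sink i ([pointer_spec]).  A packet of color i reaches the first cell of color
   i on its line ([travel]) and then descends to the sink ([reach_sink]). *)

Set Implicit Arguments.
Unset Strict Implicit.
Unset Printing Implicit Defensive.

Lemma least_nat (P : nat -> Prop) :
  (exists k, P k) -> exists k, P k /\ forall k', P k' -> k <= k'.
Proof.
move=> ex; have [k [[hk kmin] _]] :=
  dec_inh_nat_subset_has_unique_least_element _ (fun k => classic (P k)) ex.
by exists k; split=> // k' /kmin /leP.
Qed.

Lemma rt1n_first_step (A : Type) (R : A -> A -> Prop) u v :
  clos_refl_trans_1n A R u v -> u <> v -> exists w, R u w.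
Proof. by case=> [|w z hw _]; [|exists w]. Qed.

Section Board.
Variables (m n c : nat).
Notation cell := ('I_m * 'I_n)%type.
Variable sink : 'I_c -> cell.
Notation crt := (Relation_Operators.clos_refl_trans _).

Lemma cell_eq (x y : cell) : x.1 = y.1 :> nat -> x.2 = y.2 :> nat -> x = y.
Proof. by case: x y => [a b] [a' b'] /= /val_inj -> /val_inj ->. Qed.

Definition displaced (d : dir) (x y : cell) (t : nat) : Prop :=
  match d with
  | DUp => y.2 = x.2 :> nat /\ y.1 + t = x.1 :> nat
  | DDown => y.2 = x.2 :> nat /\ y.1 = x.1 + t :> nat
  | DLeft => y.1 = x.1 :> nat /\ y.2 + t = x.2 :> nat
  | DRight => y.1 = x.1 :> nat /\ y.2 = x.2 + t :> nat
  end.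

Lemma move_displaced x d y : move x d = Some y <-> displaced d x y 1.
Proof.
have row_step (r : 'I_m) (k : nat) : omap (fun k' => (r, k')) (insub k : option 'I_n) = Some y <->
    y.1 = r :> nat /\ y.2 = k :> nat.
  case: insubP => [k' _ <-|/negP kn] /=; first by split=> [[<-]|[e1 e2]] //; congr Some; exact: cell_eq.
  by split=> // -[_ e2]; case: kn; rewrite -e2.
have col_step (r : nat) (k : 'I_n) : omap (fun r' => (r', k)) (insub r : option 'I_m) = Some y <->
    y.2 = k :> nat /\ y.1 = r :> nat.
  case: insubP => [r' _ <-|/negP rm] /=; first by split=> [[<-]|[e1 e2]] //; congr Some; exact: cell_eq.
  by split=> // -[_ e2]; case: rm; rewrite -e2.
case: d => /=.
- case: ifP => [/eqP x0|/negbT x0]; first by split=> // -[_]; rewrite x0 addn1.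
  by rewrite col_step; lia.
- by rewrite col_step addn1.
- case: ifP => [/eqP x0|/negbT x0]; first by split=> // -[_]; rewrite x0 addn1.
  by rewrite row_step; lia.
- by rewrite row_step addn1.
Qed.

Lemma displaced_split d x y a b :
  displaced d x y (a + b) <-> exists z, displaced d x z a /\ displaced d z y b.
Proof.
split; last by case=> z; case: d => /=; lia.
have ltm := ltn_ord y.1; have ltn := ltn_ord y.2.
have ltm' := ltn_ord x.1; have ltn' := ltn_ord x.2.
case: d => /= -[e1 e2].
- have lt : x.1 - a < m by lia.
  by exists (Ordinal lt, x.2) => /=; lia.
- have lt : x.1 + a < m by lia.
  by exists (Ordinal lt, x.2) => /=; lia.
- have lt : x.2 - a < n by lia.
  by exists (x.1, Ordinal lt) => /=; lia.
- have lt : x.2 + a < n by lia.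
  by exists (x.1, Ordinal lt) => /=; lia.
Qed.

Definition walk (x : cell) (d : dir) (t : nat) : option cell :=
  iter t (fun o => obind (fun z => move z d) o) (Some x).

Lemma walk_add x d a b : walk x d (a + b) = obind (fun z => walk z d b) (walk x d a).
Proof.
rewrite /walk addnC iterD; case: (iter a _ _) => //= {a}.
by elim: b => //= b ->.
Qed.

Lemma walk_displaced x d t y : walk x d t = Some y <-> displaced d x y t.
Proof.
elim: t y => [|t IH] y.
  by split=> [[<-]|]; [case: d => /= | case: d => /= -[e1 e2]; congr Some; apply: cell_eq]; lia.
rewrite -addn1 walk_add displaced_split.
split=> [|[z [/IH -> /move_displaced]]] //.
by case E: (walk x d t) => [z|] //= /move_displaced; exists z; split=> //; apply/IH.
Qed.

Definition dist (x y : cell) : nat := (x.1 - y.1) + (y.1 - x.1) + (x.2 - y.2) + (y.2 - x.2).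

Definition aligned (x y : cell) : Prop := x.1 = y.1 :> nat \/ x.2 = y.2 :> nat.

Definition between (x y w : cell) : Prop :=
  (w.1 = x.1 :> nat /\ y.1 = x.1 :> nat /\ strictly_between x.2 y.2 w.2)
  \/ (w.2 = x.2 :> nat /\ y.2 = x.2 :> nat /\ strictly_between x.1 y.1 w.1).

Lemma walk_aligned x d t y : walk x d t = Some y -> aligned x y /\ t = dist x y.
Proof. by rewrite /aligned /dist walk_displaced; case: d => /=; lia. Qed.

Lemma aligned_walk x y : aligned x y -> exists d, walk x d (dist x y) = Some y.
Proof.
rewrite /aligned /dist => al.
have [lt1|ge1] := ltnP x.1 y.1; first by exists DDown; apply/walk_displaced => /=; lia.
have [lt2|ge2] := ltnP x.2 y.2; first by exists DRight; apply/walk_displaced => /=; lia.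
have [gt1|le1] := ltnP y.1 x.1; first by exists DUp; apply/walk_displaced => /=; lia.
by exists DLeft; apply/walk_displaced => /=; lia.
Qed.

Lemma walk_between x d t y : walk x d t = Some y ->
  forall w, between x y w <-> exists2 s, 0 < s < t & walk x d s = Some w.
Proof.
rewrite /between /strictly_between walk_displaced => hy w.
split=> [bw|[s st /walk_displaced hw]]; last by case: d hy hw => /=; lia.
by exists (dist x w); [|apply/walk_displaced]; rewrite /dist; case: d hy => /=; lia.
Qed.

Lemma walk_neq x d t y : 0 < t -> walk x d t = Some y -> x <> y.
Proof. by move=> t0 /walk_aligned [_ tE] E; move: t0; rewrite tE E /dist; lia. Qed.

Definition avoids (P : cell -> bool) (x : cell) (d : dir) (a b : nat) : Prop :=
  forall s w, a <= s < b -> walk x d s = Some w -> ~~ P w.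

Lemma avoids_mono (P Q : cell -> bool) x d a b a' b' :
  (forall w, Q w -> P w) -> a <= a' -> b' <= b -> avoids P x d a b -> avoids Q x d a' b'.
Proof.
move=> QP aa bb free s w st hw; apply/negP => /QP; apply/negP; apply: free hw.
by case/andP: st => s1 s2; rewrite (leq_trans aa s1) (leq_trans s2 bb).
Qed.

Lemma avoids_sub P x d a b a' b' :
  a <= a' -> b' <= b -> avoids P x d a b -> avoids P x d a' b'.
Proof. exact: avoids_mono. Qed.

Lemma avoids_suffix P x d s z a b :
  walk x d s = Some z -> avoids P x d (s + a) b -> avoids P z d a (b - s).
Proof.
move=> hz free s' w st hw; apply: (free (s + s')); last by rewrite walk_add hz.
by case/andP: st => s1 s2; rewrite leq_add2l s1 /=; lia.
Qed.

Lemma vis_cellsE i x y :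
  vis_cells sink i x y <-> aligned x y /\ forall w, between x y w -> ~~ other_sink sink i w.
Proof.
rewrite /vis_cells /aligned /between /strictly_between -!val_eqE /=; split.
  case/orP=> /andP[/eqP e /forallP H]; split; try lia; move=> w bw; apply/negP => ow;
    move: (H w); rewrite ow -!val_eqE /=; lia.
case=> al H; apply/orP; case: al => e; [left|right]; rewrite e eqxx /=;
  apply/forallP => w; apply/implyP => /andP[ow]; rewrite -val_eqE /= => /eqP we;
  apply/negP => bw; (have : ~~ other_sink sink i w by apply: H; lia); by rewrite ow.
Qed.

Lemma vis_cells_walk i x y : x <> y ->
  vis_cells sink i x y <->
  exists d t, 0 < t /\ walk x d t = Some y /\ avoids (other_sink sink i) x d 1 t.
Proof.
move=> xy; rewrite vis_cellsE; split.
  case=> al free; have [d hy] := aligned_walk al; exists d, (dist x y); split.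
    by rewrite lt0n; apply/eqP => d0; apply: xy; apply: cell_eq; move: d0; rewrite /dist; lia.
  by split=> // s w st hw; apply: free; apply/(walk_between hy); exists s.
case=> d [t [_ [hy free]]]; split; first exact: (walk_aligned hy).1.
by move=> w /(walk_between hy) [s st hw]; apply: free hw; lia.
Qed.

Lemma entry_cell (e : bedge m n) x0 d0 : entry e = Some (x0, d0) ->
  match e with
  | BLeft r => [/\ x0.1 = r, x0.2 = 0 :> nat & d0 = DRight]
  | BRight r => [/\ x0.1 = r, x0.2 = n.-1 :> nat & d0 = DLeft]
  | BTop k => [/\ x0.2 = k, x0.1 = 0 :> nat & d0 = DDown]
  | BBottom k => [/\ x0.2 = k, x0.1 = m.-1 :> nat & d0 = DUp]
  end.
Proof. by case: e => r /=; case: insubP => // k _ hk [<- <-]. Qed.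

(* Every boundary edge has an entry cell (the grid being nonempty). *)
Lemma entry_some (e : bedge m n) (y : cell) : exists x0 d0, entry e = Some (x0, d0).
Proof.
have := ltn_ord y.1; have := ltn_ord y.2.
by case: e => r /= ltn ltm; case: insubP => [k _ _|]; try (by do 2 eexists); lia.
Qed.

(* In each of the four cases the coordinates along the walk are linear in the
   number of steps, so both directions are arithmetic. *)
Lemma vis_edge_walk i (e : bedge m n) x0 d0 x : entry e = Some (x0, d0) ->
  vis_edge sink i x e <->
  exists t, walk x0 d0 t = Some x /\ avoids (other_sink sink i) x0 d0 0 t.
Proof.
move/entry_cell; have := ltn_ord x.1; have := ltn_ord x.2.
case: e => r /= lt2 lt1 [/(congr1 val) /= e1 e2 ed]; split.
all: try (case/andP=> /eqP /(congr1 val) /= xr /forallP free; exists (dist x0 x); split;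
  [ apply/walk_displaced; rewrite ed /dist /=; lia
  | move=> s w st /walk_displaced; rewrite ed /= => hw; apply/negP => ow; move: (free w);
    rewrite ow -val_eqE /=; rewrite /dist in st; lia ]).
all: case=> t [hx free]; move/walk_displaced: hx; rewrite ed /= => hx; apply/andP; split; [rewrite -val_eqE /=; lia|].
all: apply/forallP => -[a b]; apply/implyP => /andP[ow]; rewrite -val_eqE /= => /eqP ar.
all: apply/negP => lt; have := ltn_ord a; have := ltn_ord b => lb la.
all: have hw : walk x0 d0 (dist x0 (a, b)) = Some (a, b)
       by apply/walk_displaced; rewrite ed /dist /=; lia.
all: have rng : 0 <= dist x0 (a, b) < t by rewrite /dist /=; lia.
all: by have /negP := free _ _ rng hw.
Qed.

Lemma other_is_sink i w : other_sink sink i w -> is_sink sink w.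
Proof. by case/existsP=> j /andP[_ hj]; apply/existsP; exists j. Qed.

Lemma vis_cells_sym i x y : vis_cells sink i x y -> vis_cells sink i y x.
Proof.
rewrite /vis_cells /strictly_between => /orP[|] /andP[/eqP h /forallP H];
  apply/orP; [left|right]; rewrite h eqxx /=; apply/forallP => s; have := H s;
  by rewrite h minnC maxnC.
Qed.

Lemma adjG_sym col i u v : adjG sink col i u v -> adjG sink col i v u.
Proof.
case: u v => [x|e] [y|f] //= [hu [hv hadj]]; do 2 split=> //.
by case: hadj => ne /vis_cells_sym; split=> // E; apply: ne.
Qed.

Lemma crt_adjG_sym col i u v :
  crt (adjG sink col i) u v -> crt (adjG sink col i) v u.
Proof.
elim=> [a b /adjG_sym h|a|a b d _ h1 _ h2]; [exact: rt_step|exact: rt_refl|exact: rt_trans h2 h1].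
Qed.

Lemma ray_pair_vis i x0 d tx ty x y :
  walk x0 d tx = Some x -> walk x0 d ty = Some y -> tx < ty ->
  avoids (other_sink sink i) x0 d 0 ty -> vis_cells sink i x y.
Proof.
move=> hx hy lt free; have hxy : walk x d (ty - tx) = Some y.
  by move: hy; rewrite -{1}(subnKC (ltnW lt)) walk_add hx.
have xy : x <> y by apply: (walk_neq _ hxy); rewrite subn_gt0.
apply/(vis_cells_walk _ xy); exists d, (ty - tx); split; rewrite ?subn_gt0 //; split=> //.
by apply: avoids_suffix hx _; apply: avoids_mono free.
Qed.

Lemma edge_pair i e x y : vis_edge sink i x e -> vis_edge sink i y e -> x <> y ->
  vis_cells sink i x y.
Proof.
have [x0 [d0 he]] := entry_some e x.
move=> /(vis_edge_walk _ _ he) [tx [hx fx]] /(vis_edge_walk _ _ he) [ty [hy fy]] xy.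
case: (ltngtP tx ty) => [lt|lt|eq]; first exact: ray_pair_vis hx hy lt fy.
  exact/vis_cells_sym/(ray_pair_vis hy hx lt fx).
by move: hx; rewrite eq hy => -[/esym /xy].
Qed.

Definition turn (i : 'I_c) (L : layout m n c) (x : cell) (d : dir) : dir :=
  match L x with Some (j, a) => if j == i then a else d | None => d end.

Definition advance (i : 'I_c) (L : layout m n c) (o : option (cell * dir)) : option (cell * dir) :=
  obind (step sink i L) o.

Lemma step_some i L x d y d' :
  step sink i L (x, d) = Some (y, d') <->
  [/\ ~~ is_sink sink x, d' = turn i L x d & move x d' = Some y].
Proof.
rewrite /step -/(turn i L x d); case: (is_sink sink x) => /=; first by split=> [|[]].
split=> [|[_ -> -> //]]; by case E: (move x _) => [z|] //= [<- <-].
Qed.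

Lemma turn_cases i L x d : turn i L x d = d \/ exists a, L x = Some (i, a).
Proof.
rewrite /turn; case: (L x) => [[j a]|]; last by left.
by case: eqP => [->|_]; [right; exists a | left].
Qed.

Lemma travel i L x d0 d t y : ~~ is_sink sink x -> turn i L x d0 = d -> 0 < t ->
  walk x d t = Some y ->
  (forall s w, 0 < s < t -> walk x d s = Some w -> ~~ is_sink sink w /\ turn i L w d = d) ->
  iter t (advance i L) (Some (x, d0)) = Some (y, d).
Proof.
move=> hx hd; elim: t y => // t IH y _ hy H; move: hy; rewrite -addn1 walk_add.
case: t IH H => [|t] IH H; first by move=> hm; apply/step_some; split.
case E: (walk x d t.+1) => [z|] //= hm.
have [hz hdz] := H t.+1 z (ltnSn _) E.
rewrite addn1 (IH z) //; first by apply/step_some; split; rewrite ?hdz.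
by move=> s w /andP[s0 st]; apply: H; rewrite s0 /= ltnS ltnW.
Qed.

(* Where a sight line starts: at the cell a itself (first seen cell one step
   further), or at the entry cell of boundary edge e (seen from step 0). *)
Definition origin (v : vertex m n) (x0 : cell) (d : dir) (lo : nat) : Prop :=
  match v with
  | inl a => x0 = a /\ lo = 1
  | inr e => entry e = Some (x0, d) /\ lo = 0
  end.

(* [seen_from v x d]: x is reached in direction d along a sink-free straight
   line from the vertex v of G_i.  This is the invariant of packet trajectories. *)
Definition seen_from (v : vertex m n) (x : cell) (d : dir) : Prop :=
  exists x0 lo t, [/\ origin v x0 d lo, lo <= t, walk x0 d t = Some x
                    & avoids (is_sink sink) x0 d lo t].

Lemma seen_adj col i v x d :
  inV col i v -> col x = i -> seen_from v x d -> adjG sink col i v (inl x).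
Proof.
move=> hv hx [x0 [lo [t [hv0 lt hw free]]]]; do 2 split=> //.
have {}free := avoids_mono (@other_is_sink i) (leqnn _) (leqnn _) free.
case: v hv hv0 => [a|e] _ [ex0 elo]; subst lo.
  by subst x0; split; [exact: walk_neq lt hw | apply/vis_cells_walk; [exact: walk_neq lt hw|exists d, t]].
by apply/(vis_edge_walk _ _ ex0); exists t.
Qed.

Lemma seen_entry e x0 d0 : entry e = Some (x0, d0) -> seen_from (inr e) x0 d0.
Proof. by move=> he; exists x0, 0, 0; split=> // s w; rewrite ltn0 andbF. Qed.

Lemma seen_turn x d y : move x d = Some y -> seen_from (inl x) y d.
Proof. by move=> hy; exists x, 1, 1; split=> // s w; rewrite ltnNge andNb. Qed.

Lemma seen_extend v x d y :
  seen_from v x d -> ~~ is_sink sink x -> move x d = Some y -> seen_from v y d.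
Proof.
move=> [x0 [lo [t [hv0 lt hw free]]]] hx hy; exists x0, lo, t.+1; split=> //.
- exact: leqW.
- by rewrite -addn1 walk_add hw.
move=> s w /andP[s1]; rewrite ltnS leq_eqVlt => /orP[/eqP ->|st]; first by rewrite hw => -[<-].
by apply: free; rewrite s1.
Qed.

Lemma packet_seen L col i :
  (forall e k x d a, ~~ is_sink sink x -> iter k (advance i L) (entry e) = Some (x, d) ->
     L x = Some (i, a) -> col x = i) ->
  forall e k x d, iter k (advance i L) (entry e) = Some (x, d) ->
  exists v, [/\ inV col i v, crt (adjG sink col i) (inr e) v & seen_from v x d].
Proof.
move=> arrow_col e k; elim: k => [|k IH] x d /=.
  by move=> he; exists (inr e); split; [|apply: rt_refl|apply: seen_entry].
case E: (iter k (advance i L) (entry e)) => [[x' d']|] //= /step_some [hx' -> hy].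
have [v [hv hev hs]] := IH _ _ E.
case: (turn_cases i L x' d') hy => [-> hy|[a hL] hy].
  by exists v; split=> //; apply: seen_extend hs hx' hy.
have cx : col x' = i := arrow_col _ _ _ _ _ hx' E hL.
exists (inl x'); split=> //; last exact: seen_turn hy.
exact: rt_trans hev (rt_step _ _ _ _ (seen_adj hv cx hs)).
Qed.

(* A cell that sees no sink sees the left end of its row: the nearest sink to
   its left in the row would otherwise be visible. *)
Lemma blind_sees_left i x :
  (forall j, ~~ vis_cells sink j x (sink j)) -> vis_edge sink i x (BLeft n x.1).
Proof.
move=> blind; apply/andP; split=> //; apply/forallP => s; apply/implyP => /andP[os /eqP s1].
apply/negP => lt; case/existsP: os => j0 /andP[_ /eqP sj0].
pose left_of j := ((sink j).1 == x.1) && ((sink j).2 < x.2).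
have left0 : left_of j0 by rewrite /left_of sj0 s1 eqxx lt.
case: (@arg_maxnP _ j0 left_of (fun j => nat_of_ord (sink j).2) left0) => j /andP[/eqP j1 jx] jmax.
apply: (negP (blind j)); apply/orP; left; rewrite j1 eqxx /=.
apply/forallP => s'; apply/implyP => /andP[/existsP[j' /andP[_ /eqP sj']] /eqP s1'].
rewrite /strictly_between (minn_idPr (ltnW jx)) (maxn_idPl (ltnW jx)); subst s'.
apply/negP => /andP[b1 b2]; have := jmax j'; rewrite /left_of s1' eqxx b2 => /(_ isT) /=.
by rewrite leqNgt b1.
Qed.

Section Forward.
Variable L : layout m n c.
Hypothesis c_pos : 0 < c.
Hypothesis sink_inj : injective sink.
Hypothesis L_perfect : perfect sink L.

Definition visited (j : 'I_c) (x : cell) : Prop :=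
  exists e k d, iter k (advance j L) (entry e) = Some (x, d).

Definition fallback (x : cell) : 'I_c :=
  if [pick j | vis_cells sink j x (sink j)] is Some j then j else Ordinal c_pos.

Definition colF (x : cell) : 'I_c :=
  if [pick j | sink j == x] is Some j then j else
  if L x is Some (j, _) then
    (if excluded_middle_informative (visited j x) then j else fallback x)
  else fallback x.

Lemma colF_sink j : colF (sink j) = j.
Proof. by rewrite /colF; case: pickP => [j' /eqP /sink_inj //|/(_ j)]; rewrite eqxx. Qed.

Lemma colF_nonsink x : ~~ is_sink sink x ->
  colF x = if L x is Some (j, _) then
             (if excluded_middle_informative (visited j x) then j else fallback x)
           else fallback x.
Proof.
move=> hx; rewrite /colF; case: pickP => // j hj.
by case/negP: hx; apply/existsP; exists j.
Qed.

Lemma colF_arrow i x a e k d : ~~ is_sink sink x ->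
  iter k (advance i L) (entry e) = Some (x, d) -> L x = Some (i, a) -> colF x = i.
Proof.
move=> hx hk hL; rewrite colF_nonsink // hL.
by case: excluded_middle_informative => // -[]; exists e, k, d.
Qed.

(* Each boundary edge is connected to sink i, following the color-i packet. *)
Lemma edge_reaches_sink i e : crt (adjG sink colF i) (inr e) (inl (sink i)).
Proof.
have [k [d hk]] := L_perfect i e.
have [v [hv hev hs]] := packet_seen (fun e k x d a => @colF_arrow i x a e k d) hk.
exact: rt_trans hev (rt_step _ _ _ _ (seen_adj hv (colF_sink i) hs)).
Qed.

Lemma cell_reaches_sink i x : colF x = i -> crt (adjG sink colF i) (inl x) (inl (sink i)).
Proof.
move=> cx; have [/existsP[j /eqP sj]|hx] := boolP (is_sink sink x).
  by move: cx; rewrite -sj colF_sink => ->; apply: rt_refl.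
have [[e [k [d hk]]]|fb] : visited i x \/ colF x = fallback x.
  move: cx; rewrite colF_nonsink //; case: (L x) => [[j a]|]; last by right.
  by case: excluded_middle_informative => [seen <-|]; [left|right].
- have [v [hv hev hs]] := packet_seen (fun e k x d a => @colF_arrow i x a e k d) hk.
  apply: rt_trans (rt_step _ _ _ _ (adjG_sym (seen_adj hv cx hs))) _.
  exact: rt_trans (crt_adjG_sym hev) (edge_reaches_sink i e).
move: fb; rewrite cx /fallback; case: pickP => [j sees ij|blind _]; first subst j.
  apply: rt_step; split=> //; split; first exact: colF_sink.
  by split=> // E; move: hx; rewrite E; case/negP; apply/existsP; exists i.
apply: rt_trans (edge_reaches_sink i (BLeft n x.1)); apply: rt_step; split=> //; split=> //.
by apply: blind_sees_left => j; rewrite blind.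
Qed.

Lemma colF_connected i : connectedG sink colF i.
Proof.
have to_sink u : inV colF i u -> crt (adjG sink colF i) u (inl (sink i)).
  by case: u => [x|e] /= hu; [exact: cell_reaches_sink|exact: edge_reaches_sink].
by move=> u v hu hv; apply: rt_trans (to_sink u hu) (crt_adjG_sym (to_sink v hv)).
Qed.

End Forward.

Section Backward.
Variable col : cell -> 'I_c.
Hypothesis col_sink : forall j, col (sink j) = j.

Lemma sink_other i w : is_sink sink w -> col w != i -> other_sink sink i w.
Proof.
by case/existsP=> j /eqP <-; rewrite col_sink => ji; apply/existsP; exists j; rewrite ji eqxx.
Qed.

Lemma sink_of_color i z : is_sink sink z -> col z = i -> z = sink i.
Proof. by case/existsP=> j /eqP <-; rewrite col_sink => ->. Qed.

Definition hop (i : 'I_c) (x : cell) (d : dir) (t : nat) (y : cell) : Prop :=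
  [/\ 0 < t, walk x d t = Some y, col y = i
    & avoids (fun w => is_sink sink w || (col w == i)) x d 1 t].

Definition hops (i : 'I_c) (x y : cell) : Prop := exists d t, hop i x d t y.

(* A walk between two cells of color i meeting no sink of another color
   decomposes into hops, cutting at the cells of color i it crosses. *)
Lemma ray_hops i x d t y : col x = i -> col y = i -> walk x d t = Some y ->
  avoids (other_sink sink i) x d 1 t -> crt (hops i) x y.
Proof.
elim/ltn_ind: t x y => t IH x y cx cy hy free.
have [t0|t_pos] := posnP t; first by move: hy; rewrite t0 => -[<-]; apply: rt_refl.
have [[s [z [/andP[s0 st] hz cz]]]|none] :=
  classic (exists s z, [/\ 0 < s < t, walk x d s = Some z & col z = i]).
  have hzy : walk z d (t - s) = Some y.
    by move: hy; rewrite -{1}(subnKC (ltnW st)) walk_add hz.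
  apply: rt_trans (IH s st x z cx cz hz _) (IH (t - s) _ z y cz cy hzy _).
  - exact: avoids_sub (ltnW st) free.
  - by rewrite ltn_subrL s0.
  by apply: avoids_suffix hz _; apply: avoids_sub free; rewrite // addn1.
apply: rt_step; exists d, t; split=> // s w st hw.
have cw : col w != i by apply/eqP => cw; apply: none; exists s, w.
rewrite (negbTE cw) orbF; apply/negP => /sink_other /(_ cw) ow.
by move/negP: (free s w st hw).
Qed.

Lemma vis_hops i x y : col x = i -> col y = i -> x <> y -> vis_cells sink i x y ->
  crt (hops i) x y.
Proof. by move=> cx cy xy /(vis_cells_walk _ xy) [d [t [_ [hy free]]]]; apply: ray_hops hy free. Qed.

(* A cell represents a vertex of G_i: itself, or a boundary edge it sees. *)
Definition attached (i : 'I_c) (x : cell) (u : vertex m n) : Prop :=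
  u = inl x \/ exists e, u = inr e /\ vis_edge sink i x e.

Lemma adj_lift i u v x : adjG sink col i u v -> col x = i -> attached i x u ->
  exists y, [/\ col y = i, attached i y v & crt (hops i) x y].
Proof.
move=> huv cx hx; case: hx huv => [->|[e [-> he]]]; case: v => [y|f] [_ [/= cy huv]] //.
- by exists y; split=> //; [left | case: huv => xy /(vis_hops cx cy xy)].
- by exists x; split=> //; [right; exists f | apply: rt_refl].
exists y; split=> //; first by left.
have [<-|xy] := classic (x = y); first exact: rt_refl.
exact: vis_hops cx cy xy (edge_pair he huv xy).
Qed.

Lemma path_lift i u v : clos_refl_trans_1n _ (adjG sink col i) u v ->
  forall x, col x = i -> attached i x u -> exists y, [/\ col y = i, attached i y v & crt (hops i) x y].
Proof.
elim=> [{}u x cx hx|{}u w {}v huw _ IH x cx hx]; first by exists x; split=> //; apply: rt_refl.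
have [y [cy hy hxy]] := adj_lift huw cx hx.
have [z [cz hz hyz]] := IH y cy hy.
by exists z; split=> //; apply: rt_trans hxy hyz.
Qed.

Lemma hops_to_sink i : connectedG sink col i ->
  forall z, col z = i -> crt (hops i) z (sink i).
Proof.
move=> conn z cz; have zs : inV col i (inl z) by [].
have ss : inV col i (inl (sink i)) by rewrite /= col_sink.
have [y [_ [[<-]|[e [//]]] hzy]] := path_lift (clos_rt_rt1n _ _ _ _ (conn _ _ zs ss)) cz (or_introl erefl).
exact: hzy.
Qed.

Inductive hop_path (i : 'I_c) : nat -> cell -> Prop :=
  | hop_path0 : hop_path i 0 (sink i)
  | hop_pathS k x y : hops i x y -> hop_path i k y -> hop_path i k.+1 x.

Lemma hop_path_back i x y : crt (hops i) x y ->
  forall k, hop_path i k y -> exists k', hop_path i k' x.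
Proof.
elim=> [a b hab|a|a b d _ IH1 _ IH2] k hk; first by exists k.+1; exact: hop_pathS hab hk.
  by exists k.
by have [k' hk'] := IH2 k hk; exact: IH1 k' hk'.
Qed.

Lemma hop_path_inv i k x : hop_path i k x -> x <> sink i ->
  exists k' y, [/\ k = k'.+1, hops i x y & hop_path i k' y].
Proof. by case=> [|k' x' y hxy p] //; exists k', y. Qed.

Definition shortest (i : 'I_c) (x : cell) (k : nat) : Prop :=
  hop_path i k x /\ forall k', hop_path i k' x -> k <= k'.

Definition rank (i : 'I_c) (x : cell) : nat := epsilon (inhabits 0) (shortest i x).

Lemma rank_spec i x : (exists k, hop_path i k x) -> shortest i x (rank i x).
Proof.
by move=> reach; apply: (epsilon_spec (inhabits 0) (shortest i x)); apply: least_nat.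
Qed.

Definition descends (i : 'I_c) (x : cell) (d : dir) : Prop :=
  exists t y, hop i x d t y /\ rank i y < rank i x.

Lemma descent i x : (exists k, hop_path i k x) -> x <> sink i -> exists d, descends i x d.
Proof.
move=> reach xs; have [px _] := rank_spec reach.
have [k [y [ek [d [t hxy]] py]]] := hop_path_inv px xs.
exists d, t, y; split=> //; rewrite ek ltnS.
exact: (rank_spec (ex_intro _ k py)).2 _ py.
Qed.

Definition pointer (i : 'I_c) (x : cell) : dir := epsilon (inhabits DUp) (descends i x).

Lemma pointer_spec i x : (exists k, hop_path i k x) -> x <> sink i -> descends i x (pointer i x).
Proof. by move=> reach xs; apply: (epsilon_spec (inhabits DUp) (descends i x)); apply: descent. Qed.

Definition layout_of : layout m n c :=
  fun x => if is_sink sink x then None else Some (col x, pointer (col x) x).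

Lemma layout_of_valid : valid_layout sink layout_of.
Proof. by move=> j; rewrite /layout_of ifT //; apply/existsP; exists j. Qed.

Lemma turn_layout i x d : ~~ is_sink sink x ->
  turn i layout_of x d = if col x == i then pointer i x else d.
Proof. by move=> hx; rewrite /turn /layout_of (negbTE hx); case: eqP => // ->. Qed.

Section OneColor.
Variable i : 'I_c.
Hypothesis conn : connectedG sink col i.

Lemma reachable z : col z = i -> exists k, hop_path i k z.
Proof. by move=> cz; apply: (hop_path_back (hops_to_sink conn cz)); constructor. Qed.

Lemma reach_sink z d : col z = i ->
  exists k d', iter k (advance i layout_of) (Some (z, d)) = Some (sink i, d').
Proof.
have [N] := ubnP (rank i z); elim: N z d => // N IH z d ltN cz.
have [->|zs] := classic (z = sink i); first by exists 0, d.
have [t [y [[t0 hy cy free] lt]]] := pointer_spec (reachable cz) zs.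
have hz : ~~ is_sink sink z by apply/negP => /sink_of_color /(_ cz).
have [k [d' hk]] := IH y (pointer i z) (leq_trans lt ltN) cy.
exists (k + t), d'; rewrite iterD (travel hz _ t0 hy) //; first by rewrite turn_layout // cz eqxx.
move=> s w st hw; have := free s w st hw; rewrite negb_or => /andP[ws wi].
by rewrite turn_layout // (negbTE wi).
Qed.

(* A color-i packet entering through e reaches the first cell of color i on its
   line (which exists since e is adjacent in G_i to a cell it sees), then the sink. *)
Lemma edge_success e : succeeds sink i layout_of e.
Proof.
have [es ss] : inV col i (inr e) /\ inV col i (inl (sink i)) by rewrite /= col_sink.
have es_neq : inr e <> inl (sink i) by [].
have [[y|f] [_ [/= cy ye]]] := rt1n_first_step (clos_rt_rt1n _ _ _ _ (conn es ss)) es_neq => //.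
have [x0 [d0 he]] := entry_some e y.
have [t [hy free]] := (vis_edge_walk _ _ he).1 ye.
have : exists t', exists z, walk x0 d0 t' = Some z /\ col z = i by exists t, y.
case/least_nat=> t' [[z [hz cz]] tmin].
have before s w : s < t' -> walk x0 d0 s = Some w -> ~~ is_sink sink w /\ col w != i.
  move=> st hw; have wi : col w != i.
    by apply/eqP => wi; have := tmin s (ex_intro _ w (conj hw wi)); rewrite leqNgt st.
  split=> //; apply/negP => /sink_other /(_ wi) ow.
  have tt : t' <= t by apply: tmin; exists y.
  by have /negP := free s w (leq_trans st tt) hw.
have [k [d' hk]] := reach_sink d0 cz.
rewrite /succeeds he; case: t' hz tmin before => [|t'] hz tmin before.
  by move: hz => -[zx]; exists k, d'; rewrite zx.
have [hx0 cx0] := before 0 x0 (ltn0Sn _) erefl.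
exists (k + t'.+1), d'; rewrite iterD (travel hx0 _ _ hz) //; first by rewrite turn_layout // (negbTE cx0).
move=> s w /andP[_ st] hw; have [ws wi] := before s w st hw.
by rewrite turn_layout // (negbTE wi).
Qed.

End OneColor.

End Backward.

End Board.

Unset Implicit Arguments.

Theorem mainTheorem8 (m n c : nat) (sink : 'I_c -> 'I_m * 'I_n) :
  0 < c -> injective sink ->
  (exists L : layout m n c, valid_layout sink L /\ perfect sink L) <->
  (exists col : 'I_m * 'I_n -> 'I_c,
     (forall j, col (sink j) = j) /\ forall i : 'I_c, connectedG sink col i).
Proof.
move=> c_pos sink_inj; split.
  case=> L [_ L_perfect]; exists (colF sink L c_pos); split.
  - exact: colF_sink.
  - exact: colF_connected.
case=> col [col_sink conn]; exists (layout_of sink col); split.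
- exact: layout_of_valid.
- by move=> i e; apply: edge_success.
Qed.
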